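(* Define a sequence $\gamma(0),\gamma(1),\gamma(2),\dots$ by $\gamma(0)=0$ and recursively $$\gamma(2^l-k)=\frac{2^l+2(-1)^l}{3}-k+2\gamma(k)\qquad (l\ge 0,\ 0\le k\le 2^{l-1}).$$ For $n\ge0$ let $P(n)$ be the $n\times n$ matrix with entries $\binom{i+j}{i}$, $0\le i,j<n$, and $\chi_n(t)=\det(tI(n)-P(n))$. Then for all $n\in\mathbf{N}$, $$\chi_n(t)\equiv (t+1)^{\gamma(n)}(t^2+t+1)^{\gamma_2(n)}\pmod 2,$$ where $\gamma_2(n)=\frac12(n-\gamma(n))$.
   Context: $I(n)$ is the $n\times n$ identity matrix; the congruence is coefficientwise in $\mathbf{Z}[t]$. *)

From HB Require Import structures.
From mathcomp Require Import all_boot all_order all_algebra.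
Set Implicit Arguments. Unset Strict Implicit. Unset Printing Implicit Defensive.
Import Order.TTheory GRing.Theory Num.Theory.
Local Open Scope ring_scope.

(* gamma satisfies gamma(0)=0 and, for all l >= 0 and 0 <= k <= 2^(l-1)
   (i.e. 2k <= 2^l, so that for l = 0 only k = 0 is allowed),
   gamma(2^l - k) = (2^l + 2(-1)^l)/3 - k + 2 gamma(k). *)
Definition gamma_rec (gamma : nat -> int) : Prop :=
  gamma 0%N = 0 /\
  forall l k : nat, (k.*2 <= 2 ^ l)%N ->
    gamma (2 ^ l - k)%N =
      (((2 ^ l)%:Z + 2 * (-1) ^+ l) %/ 3)%Z - k%:Z + 2 * gamma k.

Definition Pmat (n : nat) : 'M[int]_n := \matrix_(i < n, j < n) ('C(i + j, i))%:Z.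

Definition chi (n : nat) : {poly int} := char_poly (Pmat n).

Definition cong2 (p q : {poly int}) : Prop := forall i : nat, (2 %| p`_i - q`_i)%Z.

From HB Require Import structures.
From mathcomp Require Import all_boot all_order all_algebra.
From mathcomp Require Import perm.
From mathcomp Require Import ring zify.
Set Implicit Arguments. Unset Strict Implicit. Unset Printing Implicit Defensive.
Import Order.TTheory GRing.Theory Num.Theory.
Local Open Scope ring_scope.

(* Reduce modulo 2.  By Lucas' theorem the Pascal matrix P(2N), N = 2^l, has
   the block form [[P(N), P(N)], [P(N), 0]]; by induction P(N)^2 is P(N) with
   rows and columns reversed and P(N)^3 = 1.  Hence (t - P)(t^2 + tP + P^2) =
   t^3 - 1 for P = P(N), and for N = n + k with 2k <= N Jacobi's complementary
   minor identity relates the leading n x n minor of t - P to the trailing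
   k x k minor of t^2 + tP + P^2.  In that corner P vanishes and P^2 is a
   reversed P(k), so in characteristic 2 this minor is chi_k(t^2) = chi_k(t)^2,
   and chi_N chi_k^2 = chi_n (t + 1)^k (t^2 + t + 1)^k.  As t + 1 and
   t^2 + t + 1 are coprime, strong induction on n, with N the least power of 2
   such that n <= N, yields the factorization, and its exponents obey the
   recursion defining gamma. *)

Lemma coef_Xadd1_exp (R : nzRingType) (a i : nat) :
  (('X + 1 : {poly R}) ^+ a)`_i = 'C(a, i)%:R.
Proof.
elim: a i => [|a IHa] i; first by rewrite expr0 coef1; case: i.
rewrite exprS mulrDl mul1r -commr_polyX coefD coefMX.
by case: i => [|i]; rewrite !IHa ?add0r ?bin0 // binS natrD addrC.
Qed.

Section BinomialPchar.
Variables (R : comNzRingType) (p : nat).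
Hypothesis pcharRp : p \in [pchar R].

Lemma Xadd1_exp_pchar (e : nat) : ('X + 1 : {poly R}) ^+ (p ^ e) = 'X^(p ^ e) + 1.
Proof.
rewrite exprDn_pchar ?expr1n // (eq_pnat _ (pchar_poly R)) (eq_pnat _ (pcharf_eq pcharRp)).
by rewrite pnatX pnat_id ?(pcharf_prime pcharRp).
Qed.

Lemma binomial_addn_pexp (e a m : nat) :
  (m < p ^ e)%N -> 'C(a + p ^ e, m)%:R = 'C(a, m)%:R :> R.
Proof.
move=> ltm; rewrite -!coef_Xadd1_exp exprD Xadd1_exp_pchar mulrDr mulr1 coefD.
by rewrite coefMXn ltm add0r.
Qed.

End BinomialPchar.

Definition rev_mx (R : Type) (n : nat) (A : 'M[R]_n) : 'M[R]_n :=
  \matrix_(i, j) A (rev_ord i) (rev_ord j).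

Lemma rev_ord_lshift (m : nat) (i : 'I_m) : rev_ord (lshift m i) = rshift m (rev_ord i).
Proof. by apply: val_inj => /=; have := ltn_ord i; lia. Qed.

Lemma rev_ord_rshift (m : nat) (i : 'I_m) : rev_ord (rshift m i) = lshift m (rev_ord i).
Proof. by apply: val_inj => /=; have := ltn_ord i; lia. Qed.

Lemma rev_mx_block (R : Type) (m : nat) (A B C D : 'M[R]_m) :
  rev_mx (block_mx A B C D) = block_mx (rev_mx D) (rev_mx C) (rev_mx B) (rev_mx A).
Proof.
rewrite -[LHS]submxK; congr block_mx; apply/matrixP => i j;
rewrite 3![LHS]mxE ?rev_ord_lshift ?rev_ord_rshift;
by rewrite ?block_mxEul ?block_mxEur ?block_mxEdl ?block_mxEdr mxE.
Qed.

Lemma rev_mx0 (R : nmodType) (n : nat) : rev_mx (0 : 'M[R]_n) = 0.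
Proof. by apply/matrixP => i j; rewrite !mxE. Qed.

Lemma rev_mxD (R : nmodType) (n : nat) (A B : 'M[R]_n) :
  rev_mx (A + B) = rev_mx A + rev_mx B.
Proof. by apply/matrixP => i j; rewrite !mxE. Qed.

Lemma rev_scalar_mx (R : nmodType) (n : nat) (a : R) : rev_mx (a%:M : 'M_n) = a%:M.
Proof. by apply/matrixP => i j; rewrite !mxE (inj_eq rev_ord_inj). Qed.

Lemma map_rev_mx (R S : Type) (f : R -> S) (n : nat) (A : 'M[R]_n) :
  map_mx f (rev_mx A) = rev_mx (map_mx f A).
Proof. by apply/matrixP => i j; rewrite !mxE. Qed.

Lemma det_rev_mx (R : comNzRingType) (n : nat) (A : 'M[R]_n) : \det (rev_mx A) = \det A.
Proof.
pose s : 'S_n := perm rev_ord_inj.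
have -> : rev_mx A = row_perm s (col_perm s A).
  by apply/matrixP => i j; rewrite !mxE !permE.
rewrite row_permE col_permE !det_mulmx !det_perm odd_permV.
by rewrite mulrCA -signr_addb addbb mulr1.
Qed.

Section CharPolyBlocks.
Variable R : comNzRingType.

Definition cubic_cofactor_mx (n : nat) (A : 'M[R]_n) : 'M[{poly R}]_n :=
  ('X^2)%:M + 'X *: map_mx polyC A + map_mx polyC (A *m A).

Lemma char_poly_mx_mul_cubic_cofactor (n : nat) (A : 'M[R]_n) :
  A *m A *m A = 1%:M -> char_poly_mx A *m cubic_cofactor_mx A = ('X^3 - 1)%:M.
Proof.
move=> A3; set At := map_mx polyC A.
have At3 : At *m At *m At = 1%:M by rewrite -!map_mxM A3 map_mx1.
rewrite /cubic_cofactor_mx map_mxM /char_poly_mx -/At mulmxBl !mulmxDr !mul_scalar_mx.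
rewrite mul_mx_scalar -scalemxAr mulmxA At3 scalerA -expr2 scale_scalar_mx -exprS.
by rewrite -(addrA ('X^3)%:M) addrKA (raddfB (@scalar_mx _ n)).
Qed.

Lemma ulsubmx_char_poly_mx (n k : nat) (A : 'M[R]_(n + k)) :
  ulsubmx (char_poly_mx A) = char_poly_mx (ulsubmx A).
Proof. by apply/matrixP => i j; rewrite !mxE (inj_eq (@lshift_inj _ _)). Qed.

Lemma drsubmx_cubic_cofactor_mx (n k : nat) (A : 'M[R]_(n + k)) :
  drsubmx (cubic_cofactor_mx A) =
  ('X^2)%:M + 'X *: map_mx polyC (drsubmx A) + map_mx polyC (drsubmx (A *m A)).
Proof. by apply/matrixP => i j; rewrite !mxE (inj_eq (@rshift_inj _ _)). Qed.

End CharPolyBlocks.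

(* Jacobi's complementary minor identity, for C a scalar multiple of M^-1. *)
Lemma det_drsubmx_of_mul_scalar (R : idomainType) (n k : nat)
    (M C : 'M[R]_(n + k)) (c : R) :
  c != 0 -> M *m C = c%:M -> \det M * \det (drsubmx C) = \det (ulsubmx M) * c ^+ k.
Proof.
move=> c_neq0 MC; have MCblock := MC.
rewrite -[M]submxK -[C]submxK mulmx_block (scalar_mx_block n k c) in MCblock.
case/eq_block_mx: MCblock => _ MCur _ MCdr.
pose K := block_mx (c%:M : 'M_n) (ursubmx C) 0 (drsubmx C).
have detMK : \det (M *m K) = \det M * (c ^+ n * \det (drsubmx C)).
  by rewrite det_mulmx det_ublock det_scalar.
rewrite -[M in M *m K]submxK mulmx_block MCur MCdr !mulmx0 !addr0 det_lblock in detMK.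
rewrite det_mulmx !det_scalar in detMK.
apply: (mulIf (expf_neq0 n c_neq0)).
by rewrite mulrAC -mulrA -detMK mulrAC.
Qed.

Local Notation F := 'F_2.

Lemma pchar_F2 : 2%N \in [pchar F]. Proof. exact: pchar_Fp. Qed.

Lemma pchar_polyF2 : 2%N \in [pchar {poly F}]. Proof. by rewrite pchar_poly pchar_F2. Qed.

Lemma addvv_F2 (V : lmodType F) (x : V) : x + x = 0.
Proof. by rewrite -mulr2n -scaler_nat (pcharf0 pchar_F2) scale0r. Qed.

Definition pascal2 (n : nat) : 'M[F]_n := \matrix_(i < n, j < n) ('C(i + j, i))%:R.

Lemma pascal2_block (l : nat) :
  pascal2 (2 ^ l + 2 ^ l) =
  block_mx (pascal2 (2 ^ l)) (pascal2 (2 ^ l)) (pascal2 (2 ^ l)) 0.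
Proof.
have binD a i : (i < 2 ^ l)%N -> 'C(a + 2 ^ l, i)%:R = 'C(a, i)%:R :> F.
  exact: binomial_addn_pexp pchar_F2 l a i.
have binC a b : 'C(a + b, a) = 'C(a + b, b) by rewrite -bin_sub ?leq_addr // addKn.
rewrite -[LHS]submxK; congr block_mx; apply/matrixP => i j; rewrite !mxE /=;
  have lti := ltn_ord i; have ltj := ltn_ord j.
- by [].
- have -> : (i + (2 ^ l + j) = i + j + 2 ^ l)%N by lia.
  by rewrite binD.
- rewrite binC; have -> : (2 ^ l + i + j = i + j + 2 ^ l)%N by lia.
  by rewrite binD // -binC.
- have -> : (2 ^ l + i + (2 ^ l + j) = i + j + 2 ^ l.+1)%N by rewrite expnS; lia.
  by rewrite (binomial_addn_pexp pchar_F2) ?bin_small // ?expnS; lia.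
Qed.

Lemma pascal2_1 : pascal2 1 = 1%:M.
Proof. by apply/matrixP => i j; rewrite !ord1 !mxE. Qed.

Lemma pascal2_sqr (l : nat) :
  pascal2 (2 ^ l) *m pascal2 (2 ^ l) = rev_mx (pascal2 (2 ^ l)).
Proof.
elim: l => [|l IHl]; first by rewrite pascal2_1 rev_scalar_mx mul1mx.
rewrite expnS mul2n -addnn pascal2_block rev_mx_block mulmx_block IHl.
by rewrite !mulmx0 !mul0mx !addr0 addvv_F2 rev_mx0.
Qed.

Lemma rev_pascal2_mul (l : nat) :
  rev_mx (pascal2 (2 ^ l)) *m pascal2 (2 ^ l) = 1%:M.
Proof.
elim: l => [|l IHl]; first by rewrite pascal2_1 rev_scalar_mx mul1mx.
rewrite expnS mul2n -addnn pascal2_block rev_mx_block rev_mx0 mulmx_block IHl.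
by rewrite !mulmx0 !mul0mx !add0r !addr0 addvv_F2 -scalar_mx_block.
Qed.

Lemma pascal2_cube (l : nat) :
  pascal2 (2 ^ l) *m pascal2 (2 ^ l) *m pascal2 (2 ^ l) = 1%:M.
Proof. by rewrite pascal2_sqr rev_pascal2_mul. Qed.

Lemma ulsubmx_pascal2 (n k : nat) : ulsubmx (pascal2 (n + k)) = pascal2 n.
Proof. by apply/matrixP => i j; rewrite !mxE. Qed.

Lemma drsubmx_rev_pascal2 (n k : nat) :
  drsubmx (rev_mx (pascal2 (n + k))) = rev_mx (pascal2 k).
Proof.
apply/matrixP => i j; rewrite !mxE /=.
have ltik := ltn_ord i; have ltjk := ltn_ord j.
have -> : (n + k - (n + i).+1 = k - i.+1)%N by lia.
by have -> : (n + k - (n + j).+1 = k - j.+1)%N by lia.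
Qed.

Lemma drsubmx_pascal2 (l n k : nat) : (n + k = 2 ^ l)%N -> (k.*2 <= 2 ^ l)%N ->
  drsubmx (pascal2 (n + k)) = 0.
Proof.
case: l => [|l] nk_pow2 k_le; first by apply/matrixP => -[i]; lia.
apply/matrixP => i j; rewrite !mxE /=; have ltik := ltn_ord i; have ltjk := ltn_ord j.
move: nk_pow2 k_le; rewrite expnS => nk_pow2 k_le.
have -> : (n + i + (n + j) = (n + i - 2 ^ l) + (n + j - 2 ^ l) + 2 ^ l.+1)%N.
  by rewrite expnS; lia.
by rewrite (binomial_addn_pexp pchar_F2) ?bin_small // ?expnS; lia.
Qed.

Lemma det_sqrX_add_F2 (n : nat) (A : 'M[F]_n) :
  \det (('X^2)%:M + map_mx polyC A) = char_poly A ^+ 2.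
Proof.
have sqrF (a : F) : a ^+ 2 = a by case: a => -[|[|//]] lt; apply: val_inj.
(* Squaring t - a gives t^2 - a^2 = t^2 + a, as a^2 = a and -1 = 1 in F_2. *)
have -> : ('X^2)%:M + map_mx polyC A = map_mx (pFrobenius_aut pchar_polyF2) (char_poly_mx A).
  apply/matrixP => i j; rewrite !mxE rmorphB rmorphMn /= !pFrobenius_autE.
  by rewrite -polyC_exp sqrF (oppr_pchar2 pchar_polyF2).
by rewrite det_map_mx /= pFrobenius_autE.
Qed.

Definition chi2 (n : nat) : {poly F} := char_poly (pascal2 n).

Lemma chi2_pow2_complement (l n k : nat) : (n + k = 2 ^ l)%N -> (k.*2 <= 2 ^ l)%N ->
  chi2 (n + k) * chi2 k ^+ 2 = chi2 n * ('X^3 - 1) ^+ k.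
Proof.
move=> nk_pow2 k_le; set P := pascal2 (n + k).
have P_sqr : P *m P = rev_mx P by rewrite /P nk_pow2 pascal2_sqr.
have P_cube : P *m P *m P = 1%:M by rewrite /P nk_pow2 pascal2_cube.
have X3_neq0 : ('X^3 - 1 : {poly F}) != 0 by rewrite monic_neq0 ?monicXnsubC.
have := det_drsubmx_of_mul_scalar X3_neq0 (char_poly_mx_mul_cubic_cofactor P_cube).
rewrite ulsubmx_char_poly_mx ulsubmx_pascal2 drsubmx_cubic_cofactor_mx P_sqr.
rewrite (drsubmx_pascal2 nk_pow2 k_le) drsubmx_rev_pascal2 map_mx0 scaler0 addr0.
by rewrite map_rev_mx -(rev_scalar_mx k ('X^2)) -rev_mxD det_rev_mx det_sqrX_add_F2.
Qed.

Lemma dvdp_exp_coprime_leq (R : idomainType) (p q : {poly R}) (x a b : nat) :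
  coprimep p q -> (1 < size p)%N -> p ^+ x %| p ^+ a * q ^+ b -> (x <= a)%N.
Proof.
move=> cop_pq p_gt1; rewrite Gauss_dvdpl ?dvdp_Pexp2l //.
by apply: coprimep_expl; apply: coprimep_expr.
Qed.

Lemma coprime_exp_cancel (R : idomainType) (p q r : {poly R}) (x y a b : nat) :
  coprimep p q -> (1 < size p)%N -> (1 < size q)%N ->
  r * (p ^+ x * q ^+ y) = p ^+ a * q ^+ b ->
  [/\ (x <= a)%N, (y <= b)%N & r = p ^+ (a - x) * q ^+ (b - y)].
Proof.
move=> cop_pq p_gt1 q_gt1 rpq.
have le_xa : (x <= a)%N.
  by apply: (dvdp_exp_coprime_leq (b := b) cop_pq p_gt1); rewrite -rpq mulrCA dvdp_mulIl.
have le_yb : (y <= b)%N.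
  apply: (dvdp_exp_coprime_leq (p := q) (q := p) (b := a)); rewrite 1?coprimep_sym //.
  by rewrite mulrC -rpq mulrA dvdp_mulIr.
have p_neq0 : p != 0 by rewrite -size_poly_gt0 ltnW.
have q_neq0 : q != 0 by rewrite -size_poly_gt0 ltnW.
split=> //; apply: (mulIf (mulf_neq0 (expf_neq0 x p_neq0) (expf_neq0 y q_neq0))).
by rewrite rpq mulrACA -!exprD !subnK.
Qed.

Local Notation phi1 := ('X + 1 : {poly F}).
Local Notation phi3 := ('X^2 + 'X + 1 : {poly F}).

Lemma X3sub1_F2 : 'X^3 - 1 = phi1 * phi3.
Proof.
rewrite (oppr_pchar2 pchar_polyF2).
have -> : phi1 * phi3 = 'X^3 + 1 + ('X^2 + 'X) *+ 2 by ring.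
by rewrite mulr2n (addrr_pchar2 pchar_polyF2) addr0.
Qed.

Lemma size_phi1 : size phi1 = 2%N.
Proof. by rewrite -polyC1 size_XaddC. Qed.

Lemma size_phi3 : size phi3 = 3%N.
Proof. by rewrite -addrA size_polyDl size_polyXn // -polyC1 size_XaddC. Qed.

Lemma coprimep_phi1_phi3 : coprimep phi1 phi3.
Proof.
apply/Bezout_coprimepP; exists (- 'X, 1) => /=.
have -> : - 'X * phi1 + 1 * phi3 = 1 by ring.
exact: eqpxx.
Qed.

Lemma phi_exp_cancel (r : {poly F}) (x y a b : nat) :
  r * (phi1 ^+ x * phi3 ^+ y) = phi1 ^+ a * phi3 ^+ b ->
  [/\ (x <= a)%N, (y <= b)%N & r = phi1 ^+ (a - x) * phi3 ^+ (b - y)].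
Proof. by apply: coprime_exp_cancel; rewrite ?coprimep_phi1_phi3 ?size_phi1 ?size_phi3. Qed.

Lemma chi2_neq0 (n : nat) : chi2 n != 0.
Proof. exact: monic_neq0 (char_poly_monic _). Qed.

Lemma chi2_1 : chi2 1 = phi1.
Proof. by rewrite /chi2 /char_poly det_mx11 !mxE /= (oppr_pchar2 pchar_polyF2) mulr1n. Qed.

Lemma pow2_between (n : nat) : (0 < n)%N -> exists l, (n <= 2 ^ l < n.*2)%N.
Proof.
move=> n_gt0; exists (up_log 2 n); rewrite up_logP //=.
have [n_gt1 | n_le1] := ltnP 1 n; last by have -> : n = 1%N by lia.
have up_gt0 : (0 < up_log 2 n)%N by rewrite up_log_gt0 n_gt1.
have := up_log_gtn (isT : (1 < 2)%N) n_gt1.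
by rewrite -{2}(prednK up_gt0) expnS; lia.
Qed.

Section GammaFactorization.
Variable gamma : nat -> int.
Hypothesis hgamma : gamma_rec gamma.

(* The instance k = 0 identifies the constant (2^l + 2(-1)^l)/3 with gamma (2^l). *)
Lemma gamma_rec_pow2 (l k : nat) : (k.*2 <= 2 ^ l)%N ->
  gamma (2 ^ l - k) = gamma (2 ^ l) - k%:Z + 2 * gamma k.
Proof.
case: hgamma => gamma0 recP k_le; rewrite recP //.
by have := recP l 0%N (leq0n _); rewrite subn0 gamma0 mulr0 addr0 subr0 => ->.
Qed.

Lemma gamma1 : gamma 1 = 1.
Proof. by case: hgamma => gamma0 recP; have := recP 0%N 0%N isT; rewrite gamma0. Qed.

Lemma gamma_pow2S (l : nat) : gamma (2 ^ l.+1) = (2 ^ l)%:Z - gamma (2 ^ l).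
Proof.
have := @gamma_rec_pow2 l.+1 (2 ^ l); rewrite {1 2}expnS mul2n leqnn => /(_ isT).
have -> : ((2 ^ l).*2 - 2 ^ l = 2 ^ l)%N by lia.
lia.
Qed.

Definition chi2_factors (n : nat) : Prop := exists a b : nat,
  [/\ gamma n = a%:Z, n = (a + b.*2)%N & chi2 n = phi1 ^+ a * phi3 ^+ b].

Lemma chi2_factors_pow2 (l : nat) : chi2_factors (2 ^ l).
Proof.
elim: l => [|l [a [b [ga pow2_ab chi_l]]]].
  by exists 1%N, 0%N; rewrite gamma1 chi2_1 expr1 expr0 mulr1.
have ll_pow2 : (2 ^ l + 2 ^ l = 2 ^ l.+1)%N by rewrite expnS; lia.
have le_pow2 : ((2 ^ l).*2 <= 2 ^ l.+1)%N by rewrite expnS mul2n.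
have := chi2_pow2_complement ll_pow2 le_pow2.
rewrite ll_pow2 expr2 mulrA [RHS]mulrC => /(mulIf (chi2_neq0 _)).
rewrite chi_l X3sub1_F2 exprMn => /phi_exp_cancel[le_a le_b chi_lS].
exists (2 ^ l - a)%N, (2 ^ l - b)%N; split=> //; last by rewrite expnS; lia.
by rewrite gamma_pow2S ga; lia.
Qed.

Lemma chi2_factorization (n : nat) : chi2_factors n.
Proof.
elim/ltn_ind: n => -[|n] IHn.
  exists 0%N, 0%N; rewrite /chi2 /char_poly det_mx00 mulr1.
  by case: hgamma.
have [l /andP[le_n lt_2n]] := pow2_between (ltn0Sn n).
set m := n.+1 in IHn le_n lt_2n *; set k := (2 ^ l - m)%N.
have mk_pow2 : (m + k = 2 ^ l)%N by rewrite /k; lia.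
have k_le : (k.*2 <= 2 ^ l)%N by rewrite /k; lia.
have [a [b [ga k_ab chi_k]]] := IHn k (ltac:(rewrite /k; lia)).
have [c [d [gc pow2_cd chi_l]]] := chi2_factors_pow2 l.
have := chi2_pow2_complement mk_pow2 k_le; rewrite mk_pow2 chi_l chi_k X3sub1_F2 => split_eq.
have : chi2 m * (phi1 ^+ k * phi3 ^+ k) = phi1 ^+ (c + a.*2) * phi3 ^+ (d + b.*2).
  by rewrite -exprMn -split_eq !exprD -!muln2 !exprM; ring.
case/phi_exp_cancel => le_k1 le_k3 chi_m.
exists (c + a.*2 - k)%N, (d + b.*2 - k)%N; split=> //; last by lia.
by have := gamma_rec_pow2 k_le; rewrite gc ga -mk_pow2 addnK => ->; lia.
Qed.

End GammaFactorization.

Lemma cong2_map_F2 (p q : {poly int}) :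
  map_poly (intr : int -> F) p = map_poly intr q -> cong2 p q.
Proof.
move=> pq i; rewrite (dvdz_pcharf pchar_F2) intrB.
by rewrite -!(coef_map (intr : int -> F)) pq subrr.
Qed.

Lemma map_chi_F2 (n : nat) : map_poly (intr : int -> F) (chi n) = chi2 n.
Proof. by rewrite /chi map_char_poly; congr char_poly; apply/matrixP => i j; rewrite !mxE. Qed.

Theorem theorem1p4 (gamma : nat -> int) (hg : gamma_rec gamma) (n : nat) :
  [/\ 0 <= gamma n, gamma n <= n%:Z, (2 %| n%:Z - gamma n)%Z &
      cong2 (chi n)
        (('X + 1) ^+ `|gamma n|%N * ('X ^+ 2 + 'X + 1) ^+ `|((n%:Z - gamma n) %/ 2)%Z|%N)].
Proof.
have [a [b [ga n_ab chi_n]]] := chi2_factorization hg n.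
have n_gamma : n%:Z - gamma n = b%:Z * 2 by rewrite ga n_ab; lia.
rewrite n_gamma mulzK // ga; split=> //.
- by rewrite n_ab; lia.
- by apply/dvdzP; exists b%:Z.
- apply: cong2_map_F2; rewrite map_chi_F2 chi_n.
  by rewrite rmorphM !rmorphXn !rmorphD !rmorph1 /= map_polyXn map_polyX.
Qed.
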